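(* Let $K$ be a nonempty finite set and $X=\Delta(K)$ with the norm $\|\cdot\|_1$. Then $D_0\subset D_1$, and the closure of $D_0$ in $\mathcal C(X)$ (uniform norm) equals $D_1$.
   Context: $X=\Delta(K)=\{p\in\mathbb R_+^K:\sum_k p^k=1\}$, viewed as a subset of $\mathbb R^K$ with $\|p\|_1=\sum_k|p^k|$. $D_1=\{f\in\mathcal C(X):\ \forall x,y\in X,\ \forall a,b\ge0,\ af(x)-bf(y)\le\|ax-by\|_1\}$. $D_0$ is the set of functions $f:X\to\mathbb R$ of the following form. There exist: - nonempty finite sets $I,J$, and - matrices $(G^k)_{k\in K}$ in $[-1,1]^{I\times J}$, such that for all $p\in X$, $f(p)=\mathrm{Val}\big(\sum_kp^kG^k\big)$, where $\mathrm{Val}$ denotes the value of a zero-sum matrix game. *)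

From Stdlib Require Import Reals.
Open Scope R_scope.

Fixpoint rsum (f : nat -> R) (m : nat) : R :=
  match m with
  | O => 0
  | S m' => rsum f m' + f m'
  end.

Definition simplex (m : nat) (p : nat -> R) : Prop :=
  (forall k, (k < m)%nat -> 0 <= p k) /\ rsum p m = 1.

Definition norm1 (n : nat) (x : nat -> R) : R := rsum (fun k => Rabs (x k)) n.

Definition is_value (m l : nat) (A : nat -> nat -> R) (v : R) : Prop :=
  (exists x, simplex m x /\
     forall j, (j < l)%nat -> v <= rsum (fun i => x i * A i j) m) /\
  (exists y, simplex l y /\
     forall i, (i < m)%nat -> rsum (fun j => A i j * y j) l <= v).

(* Functions X -> R are represented by f : (nat -> R) -> R, of which only
   the restriction to X = simplex n matters. *)
Definition contX (n : nat) (f : (nat -> R) -> R) : Prop :=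
  forall x, simplex n x -> forall eps, 0 < eps ->
    exists delta, 0 < delta /\
      forall y, simplex n y -> norm1 n (fun k => x k - y k) < delta ->
        Rabs (f x - f y) < eps.

Definition D1 (n : nat) (f : (nat -> R) -> R) : Prop :=
  contX n f /\
  forall x y, simplex n x -> simplex n y -> forall a b, 0 <= a -> 0 <= b ->
    a * f x - b * f y <= norm1 n (fun k => a * x k - b * y k).

(* G k i j : the (i,j) entry of the matrix G^k *)
Definition D0 (n : nat) (f : (nat -> R) -> R) : Prop :=
  exists (m l : nat) (G : nat -> nat -> nat -> R),
    (1 <= m)%nat /\ (1 <= l)%nat /\
    (forall k i j, (k < n)%nat -> (i < m)%nat -> (j < l)%nat ->
       -1 <= G k i j <= 1) /\
    forall p, simplex n p ->
      is_value m l (fun i j => rsum (fun k => p k * G k i j) n) (f p).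

Definition closure_D0 (n : nat) (f : (nat -> R) -> R) : Prop :=
  contX n f /\
  forall eps, 0 < eps -> exists g, D0 n g /\
    forall p, simplex n p -> Rabs (f p - g p) <= eps.

From Stdlib Require Import Reals Lra Lia ZArith IndefiniteDescription.
Open Scope R_scope.

(* 1. D0 <= D1.  If f(p) = Val(sum_k p_k G^k), play an optimal row strategy of
      the game at x against an optimal column strategy of the game at y: since
      every entry of a A(x) - b A(y) is at most |a x - b y|_1 (the entries of
      the G^k lie in [-1,1]), a f(x) - b f(y) <= |a x - b y|_1.  With a = b = 1
      this makes f 1-Lipschitz, hence continuous.
   2. closure(D0) <= D1, because the D1 inequality passes to uniform limits.
   3. D1 <= closure(D0).  For x, q in the simplex, a "tilted" functional
      c = clip((q - t x)/h) with a threshold t >= 0 chosen by the intermediate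
      value theorem satisfies <c,x> <= f(x) + eta and <c,q> >= f(q) - eta
      (lemma [separation]).  Over a finite net (P r) of the simplex, the
      minimax g = min_r max_s <C r s, .> of such functionals is a game value
      (the maximizer chooses a response r |-> s, encoded in base-(T+1) digits),
      and g approximates f uniformly since everything is 1-Lipschitz. *)

Lemma rsum_ext f g m :
  (forall k, (k < m)%nat -> f k = g k) -> rsum f m = rsum g m.
Proof.
  induction m as [|m IH]; intros H; simpl; [reflexivity|].
  rewrite IH by (intros; apply H; lia). rewrite H by lia. reflexivity.
Qed.

Lemma rsum_le f g m :
  (forall k, (k < m)%nat -> f k <= g k) -> rsum f m <= rsum g m.
Proof.
  induction m as [|m IH]; intros H; simpl; [lra|].
  assert (f m <= g m) by (apply H; lia).
  assert (rsum f m <= rsum g m) by (apply IH; intros; apply H; lia).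
  lra.
Qed.

Lemma rsum_plus f g m : rsum (fun k => f k + g k) m = rsum f m + rsum g m.
Proof. induction m; simpl; lra. Qed.

Lemma rsum_minus f g m : rsum (fun k => f k - g k) m = rsum f m - rsum g m.
Proof. induction m; simpl; lra. Qed.

Lemma rsum_scal c f m : rsum (fun k => c * f k) m = c * rsum f m.
Proof. induction m as [|m IH]; simpl; [ring|]. rewrite IH; ring. Qed.

Lemma rsum_const c m : rsum (fun _ => c) m = INR m * c.
Proof. induction m as [|m IH]; simpl rsum; [simpl; ring|]. rewrite IH, S_INR; ring. Qed.

Lemma rsum_abs f m : Rabs (rsum f m) <= rsum (fun k => Rabs (f k)) m.
Proof.
  induction m as [|m IH]; simpl; [rewrite Rabs_R0; lra|].
  eapply Rle_trans; [apply Rabs_triang|lra].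
Qed.

Lemma rsum_swap (F : nat -> nat -> R) a b :
  rsum (fun i => rsum (fun j => F i j) b) a = rsum (fun j => rsum (fun i => F i j) a) b.
Proof.
  induction a as [|a IH]; simpl.
  - induction b; simpl; lra.
  - rewrite IH, <- rsum_plus; reflexivity.
Qed.

Lemma telescope (g : nat -> R) m : rsum (fun k => g (S k) - g k) m = g m - g O.
Proof. induction m as [|m IH]; simpl; [ring|]. rewrite IH; ring. Qed.

Lemma rsum_prefix_le f m k :
  (forall i, (i < m)%nat -> 0 <= f i) -> (k <= m)%nat -> rsum f k <= rsum f m.
Proof.
  intros Hf Hk; induction Hk as [|m Hk IH]; [lra|].
  simpl; assert (0 <= f m) by (apply Hf; lia).
  assert (rsum f k <= rsum f m) by (apply IH; intros; apply Hf; lia). lra.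
Qed.

Lemma rsum_term_le f m k :
  (forall i, (i < m)%nat -> 0 <= f i) -> (k < m)%nat -> f k <= rsum f m.
Proof.
  intros Hf Hk.
  assert (0 <= rsum f k) by (apply (rsum_prefix_le f k O); [intros; apply Hf; lia|lia]).
  assert (rsum f (S k) <= rsum f m) by (apply rsum_prefix_le; auto).
  simpl in *; lra.
Qed.

Lemma average_le m s g v : simplex m s ->
  (forall i, (i < m)%nat -> g i <= v) -> rsum (fun i => s i * g i) m <= v.
Proof.
  intros [Hs0 Hs1] Hg.
  replace v with (rsum (fun i => s i * v) m).
  - apply rsum_le; intros i Hi. apply Rmult_le_compat_l; auto.
  - rewrite (rsum_ext _ (fun i => v * s i)), rsum_scal, Hs1 by (intros; ring); ring.
Qed.

Lemma average_ge m s g v : simplex m s ->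
  (forall i, (i < m)%nat -> v <= g i) -> v <= rsum (fun i => s i * g i) m.
Proof.
  intros Hs Hg.
  assert (E : rsum (fun i => s i * - g i) m = - rsum (fun i => s i * g i) m).
  { rewrite (rsum_ext _ (fun i => -1 * (s i * g i))), rsum_scal by (intros; ring); ring. }
  assert (rsum (fun i => s i * - g i) m <= - v)
    by (apply average_le; auto; intros i Hi; specialize (Hg i Hi); lra).
  lra.
Qed.

Definition vertex (i0 i : nat) : R := if Nat.eq_dec i i0 then 1 else 0.

Lemma rsum_vertex i0 a m :
  (i0 < m)%nat -> rsum (fun i => vertex i0 i * a i) m = a i0.
Proof.
  induction m as [|m IH]; intros H; [lia|]. simpl. unfold vertex at 2.
  destruct (Nat.eq_dec m i0) as [->|Hne].
  - rewrite (rsum_ext _ (fun _ => 0)), rsum_const; [ring|].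
    intros k Hk; unfold vertex; destruct Nat.eq_dec; [lia|ring].
  - rewrite IH by lia; ring.
Qed.

Lemma simplex_vertex m i0 : (i0 < m)%nat -> simplex m (vertex i0).
Proof.
  intros H; split.
  - intros; unfold vertex; destruct Nat.eq_dec; lra.
  - rewrite (rsum_ext _ (fun i => vertex i0 i * 1)) by (intros; ring).
    apply rsum_vertex; auto.
Qed.

Lemma simplex_coord_le1 m p k : simplex m p -> (k < m)%nat -> p k <= 1.
Proof. intros [H0 H1] Hk. rewrite <- H1. apply rsum_term_le; auto. Qed.

Lemma norm1_ext n u v :
  (forall k, (k < n)%nat -> u k = v k) -> norm1 n u = norm1 n v.
Proof. intros H; apply rsum_ext; intros k Hk; rewrite H; auto. Qed.

Lemma norm1_sym n p q : norm1 n (fun k => p k - q k) = norm1 n (fun k => q k - p k).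
Proof. apply rsum_ext; intros; apply Rabs_minus_sym. Qed.

Lemma norm1_simplex n x : simplex n x -> norm1 n x = 1.
Proof.
  intros [H0 H1]. rewrite <- H1. apply rsum_ext; intros.
  apply Rabs_right, Rle_ge, H0; auto.
Qed.

Definition lin (n : nat) (c p : nat -> R) : R := rsum (fun k => p k * c k) n.

Definition bounded1 (n : nat) (c : nat -> R) : Prop :=
  forall k, (k < n)%nat -> -1 <= c k <= 1.

Lemma lin_abs_le n c u : bounded1 n c -> Rabs (lin n c u) <= norm1 n u.
Proof.
  intros Hc. unfold lin, norm1.
  eapply Rle_trans; [apply rsum_abs|]. apply rsum_le; intros k Hk.
  rewrite Rabs_mult.
  assert (Rabs (c k) <= 1) by (apply Rabs_le, Hc; auto).
  assert (0 <= Rabs (u k)) by apply Rabs_pos. nra.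
Qed.

Lemma lin_affine n c u v a b :
  lin n c (fun k => a * u k - b * v k) = a * lin n c u - b * lin n c v.
Proof.
  unfold lin. rewrite <- !rsum_scal, <- rsum_minus. apply rsum_ext; intros; ring.
Qed.

Lemma lin_lipschitz n c u v : bounded1 n c ->
  Rabs (lin n c u - lin n c v) <= norm1 n (fun k => u k - v k).
Proof.
  intros Hc. replace (lin n c u - lin n c v) with (lin n c (fun k => u k - v k)).
  - apply lin_abs_le; auto.
  - unfold lin; rewrite <- rsum_minus; apply rsum_ext; intros; ring.
Qed.

Definition bil (m l : nat) (s : nat -> R) (A : nat -> nat -> R) (t : nat -> R) : R :=
  rsum (fun i => s i * rsum (fun j => A i j * t j) l) m.

Lemma bil_ge_row m l s A t v : simplex l t ->
  (forall j, (j < l)%nat -> v <= rsum (fun i => s i * A i j) m) -> v <= bil m l s A t.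
Proof.
  intros Ht Hs. unfold bil.
  rewrite (rsum_ext _ (fun i => rsum (fun j => t j * (s i * A i j)) l))
    by (intros; rewrite <- rsum_scal; apply rsum_ext; intros; ring).
  rewrite rsum_swap.
  rewrite (rsum_ext _ (fun j => t j * rsum (fun i => s i * A i j) m))
    by (intros; apply rsum_scal).
  apply average_ge; auto.
Qed.

Lemma bil_le_col m l s A t v : simplex m s ->
  (forall i, (i < m)%nat -> rsum (fun j => A i j * t j) l <= v) -> bil m l s A t <= v.
Proof. intros Hs Ht. apply average_le; auto. Qed.

Lemma bil_le_entries m l s A t v : simplex m s -> simplex l t ->
  (forall i j, (i < m)%nat -> (j < l)%nat -> A i j <= v) -> bil m l s A t <= v.
Proof.
  intros Hs Ht HA. apply bil_le_col; auto. intros i Hi.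
  rewrite (rsum_ext _ (fun j => t j * A i j)) by (intros; ring).
  apply average_le; auto.
Qed.

Lemma bil_affine m l s A B t a b :
  bil m l s (fun i j => a * A i j - b * B i j) t = a * bil m l s A t - b * bil m l s B t.
Proof.
  unfold bil. rewrite <- !rsum_scal, <- rsum_minus. apply rsum_ext; intros i _.
  rewrite (rsum_ext _ (fun j => a * (A i j * t j) - b * (B i j * t j))) by (intros; ring).
  rewrite rsum_minus, !rsum_scal; ring.
Qed.

Definition D1ineq (n : nat) (f : (nat -> R) -> R) : Prop :=
  forall x y, simplex n x -> simplex n y -> forall a b, 0 <= a -> 0 <= b ->
    a * f x - b * f y <= norm1 n (fun k => a * x k - b * y k).

(* The inequality of D1 for a game value: play an optimal row strategy
   of the game at x against an optimal column strategy of the game at y; every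
   entry of a A(x) - b A(y) is bounded by |a x - b y|_1. *)
Lemma D0_ineq n f : D0 n f -> D1ineq n f.
Proof.
  intros [m [l [G [_ [_ [HG Hv]]]]]] x y Hx Hy a b Ha Hb.
  set (A := fun p i j => lin n (fun k => G k i j) p).
  destruct (Hv x Hx) as [[s [Hs Hs_opt]] _].
  destruct (Hv y Hy) as [_ [t [Ht Ht_opt]]].
  assert (Hfx : f x <= bil m l s (A x) t) by (apply bil_ge_row; auto).
  assert (Hfy : bil m l s (A y) t <= f y) by (apply bil_le_col; auto).
  assert (Hdiff : bil m l s (fun i j => a * A x i j - b * A y i j) t
                  <= norm1 n (fun k => a * x k - b * y k)).
  { apply bil_le_entries; auto. intros i j Hi Hj. unfold A.
    rewrite <- lin_affine. eapply Rle_trans; [apply Rle_abs|].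
    apply lin_abs_le. intros k Hk. apply HG; auto. }
  rewrite bil_affine in Hdiff. nra.
Qed.

Lemma D1ineq_lipschitz n f : D1ineq n f -> forall x y, simplex n x -> simplex n y ->
    Rabs (f x - f y) <= norm1 n (fun k => x k - y k).
Proof.
  intros HD x y Hx Hy.
  assert (E : forall u v, norm1 n (fun k => 1 * u k - 1 * v k) = norm1 n (fun k => u k - v k))
    by (intros; apply norm1_ext; intros; ring).
  pose proof (HD x y Hx Hy 1 1 ltac:(lra) ltac:(lra)) as H1.
  pose proof (HD y x Hy Hx 1 1 ltac:(lra) ltac:(lra)) as H2.
  rewrite E in H1, H2. rewrite norm1_sym in H2. apply Rabs_le; lra.
Qed.

Lemma Rabs_le_inv x a : Rabs x <= a -> - a <= x <= a.
Proof. unfold Rabs; destruct Rcase_abs; lra. Qed.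

Lemma lipschitz_contX n f :
  (forall x y, simplex n x -> simplex n y ->
     Rabs (f x - f y) <= norm1 n (fun k => x k - y k)) -> contX n f.
Proof.
  intros Hf x Hx eps He. exists eps; split; auto.
  intros y Hy Hxy. eapply Rle_lt_trans; [apply Hf|]; auto.
Qed.

Lemma D0_sub_D1 n f : D0 n f -> D1 n f.
Proof.
  intros Hf. pose proof (D0_ineq n f Hf) as HD. split; [|exact HD].
  apply lipschitz_contX, D1ineq_lipschitz; auto.
Qed.

(* D1 is closed under uniform limits: if the D1 inequality failed by some
   d > 0 at (x, y, a, b), it would fail for every uniform approximation
   within d / (2 (a + b + 1)), in particular for an element of D0. *)
Lemma closure_D0_sub_D1 n f : closure_D0 n f -> D1 n f.
Proof.
  intros [Hc Happrox]. split; [exact Hc|].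
  intros x y Hx Hy a b Ha Hb.
  set (N := norm1 n (fun k => a * x k - b * y k)).
  apply Rnot_lt_le; intros Hlt.
  set (d := a * f x - b * f y - N).
  set (eps := d / (2 * (a + b + 1))).
  assert (He : 0 < eps) by (apply Rdiv_lt_0_compat; unfold d; lra).
  assert (Hd : eps * (2 * (a + b + 1)) = d) by (unfold eps; field; lra).
  destruct (Happrox eps He) as [g [Hg Hfg]].
  pose proof (D0_ineq n g Hg x y Hx Hy a b Ha Hb) as Hgi. fold N in Hgi.
  pose proof (Rabs_le_inv _ _ (Hfg x Hx)) as Ex.
  pose proof (Rabs_le_inv _ _ (Hfg y Hy)) as Ey.
  assert (a * f x <= a * g x + a * eps) by nra.
  assert (b * g y <= b * f y + b * eps) by nra.
  unfold d in Hd. nra.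
Qed.

Fixpoint max_upto (g : nat -> R) (T : nat) : R :=
  match T with O => g O | S T' => Rmax (max_upto g T') (g (S T')) end.

Definition min_upto (g : nat -> R) (T : nat) : R := - max_upto (fun s => - g s) T.

Lemma max_upto_ge g T s : (s <= T)%nat -> g s <= max_upto g T.
Proof.
  induction T as [|T IH]; intros Hs; simpl.
  - replace s with O by lia; lra.
  - destruct (Nat.eq_dec s (S T)) as [->|Hne]; [apply Rmax_r|].
    eapply Rle_trans; [apply IH; lia|apply Rmax_l].
Qed.

Lemma max_upto_attained g T : exists s, (s <= T)%nat /\ g s = max_upto g T.
Proof.
  induction T as [|T [s [Hs Hgs]]]; [exists O; auto|]. simpl.
  destruct (Rle_dec (max_upto g T) (g (S T))).
  - exists (S T); rewrite Rmax_right; auto.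
  - exists s; rewrite Rmax_left by lra; auto.
Qed.

Lemma max_upto_le g T v : (forall s, (s <= T)%nat -> g s <= v) -> max_upto g T <= v.
Proof. intros H. destruct (max_upto_attained g T) as [s [Hs <-]]; auto. Qed.

Lemma min_upto_le g T s : (s <= T)%nat -> min_upto g T <= g s.
Proof. intros Hs. pose proof (max_upto_ge (fun s => - g s) T s Hs). unfold min_upto; lra. Qed.

Lemma min_upto_attained g T : exists s, (s <= T)%nat /\ g s = min_upto g T.
Proof.
  destruct (max_upto_attained (fun s => - g s) T) as [s [Hs E]].
  exists s; split; auto. unfold min_upto; rewrite <- E; ring.
Qed.

Lemma min_upto_ge g T v : (forall s, (s <= T)%nat -> v <= g s) -> v <= min_upto g T.
Proof. intros H. destruct (min_upto_attained g T) as [s [Hs <-]]; auto. Qed.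

(** Base-b digits: every index i < b^Q encodes a function {0..Q-1} -> {0..b-1}. *)

Definition digit (b r i : nat) : nat := ((i / b ^ r) mod b)%nat.

Lemma digit_lt b r i : (1 <= b)%nat -> (digit b r i < b)%nat.
Proof. intros; unfold digit; apply Nat.mod_upper_bound; lia. Qed.

Lemma digits_choice b Q (P : nat -> nat -> Prop) : (1 <= b)%nat ->
  (forall r, (r < Q)%nat -> exists d, (d < b)%nat /\ P r d) ->
  exists i, (i < b ^ Q)%nat /\ forall r, (r < Q)%nat -> P r (digit b r i).
Proof.
  intros Hb. induction Q as [|Q IH]; intros HP.
  { exists O; split; [simpl; lia|intros; lia]. }
  destruct IH as [i [Hi Hdi]]; [intros; apply HP; lia|].
  destruct (HP Q ltac:(lia)) as [d [Hd HPd]].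
  exists (i + d * b ^ Q)%nat; split.
  { rewrite Nat.pow_succ_r'. nia. }
  intros r Hr. unfold digit.
  assert (Hpos : (b ^ r <> 0)%nat) by (apply Nat.pow_nonzero; lia).
  destruct (Nat.eq_dec r Q) as [->|Hne].
  - rewrite Nat.div_add, Nat.div_small, Nat.mod_small by (auto; lia). exact HPd.
  - assert (E : (d * b ^ Q = (d * b ^ (Q - r - 1) * b) * b ^ r)%nat).
    { rewrite <- !Nat.mul_assoc, <- Nat.pow_succ_r', <- Nat.pow_add_r.
      do 2 f_equal; lia. }
    rewrite E, Nat.div_add, Nat.Div0.mod_add by auto. apply Hdi; lia.
Qed.

Lemma pure_saddle_value m l A v i0 j0 : (i0 < m)%nat -> (j0 < l)%nat ->
  (forall j, (j < l)%nat -> v <= A i0 j) ->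
  (forall i, (i < m)%nat -> A i j0 <= v) -> is_value m l A v.
Proof.
  intros Hi0 Hj0 Hrow Hcol. split.
  - exists (vertex i0); split; [apply simplex_vertex; auto|].
    intros j Hj. rewrite rsum_vertex; auto.
  - exists (vertex j0); split; [apply simplex_vertex; auto|].
    intros i Hi. rewrite (rsum_ext _ (fun j => vertex j0 j * A i j)) by (intros; ring).
    rewrite rsum_vertex; auto.
Qed.

(* Given a (Q+1) x (T+1) family of functionals C r s with coefficients in
   [-1,1], p |-> min_r max_s <C r s, p> is a game value: the minimizer picks r,
   the maximizer picks a whole response r |-> s, encoded by the digits of an
   index in base T+1. *)
Lemma minmax_in_D0 n Q T (C : nat -> nat -> nat -> R) :
  (forall r s, (r <= Q)%nat -> (s <= T)%nat -> bounded1 n (C r s)) ->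
  D0 n (fun p => min_upto (fun r => max_upto (fun s => lin n (C r s) p) T) Q).
Proof.
  intros HC.
  exists ((T + 1) ^ (Q + 1))%nat, (Q + 1)%nat, (fun k i j => C j (digit (T + 1) j i) k).
  split; [assert ((T + 1) ^ (Q + 1) <> 0)%nat by (apply Nat.pow_nonzero; lia); lia|].
  split; [lia|].
  split.
  { intros k i j Hk Hi Hj. apply HC; auto; try lia.
    pose proof (digit_lt (T + 1) j i ltac:(lia)); lia. }
  intros p Hp.
  set (h := fun r s => lin n (C r s) p).
  destruct (digits_choice (T + 1) (Q + 1) (fun r s => h r s = max_upto (h r) T))
    as [i0 [Hi0 Hbest]]; [lia| |].
  { intros r _. destruct (max_upto_attained (h r) T) as [s [Hs E]].
    exists s; split; [lia|auto]. }
  destruct (min_upto_attained (fun r => max_upto (h r) T) Q) as [r0 [Hr0 Hmin]].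
  apply (pure_saddle_value _ _ _ _ i0 r0); auto; [lia|..].
  - intros j Hj. change (min_upto (fun r => max_upto (h r) T) Q <= h j (digit (T + 1) j i0)).
    rewrite Hbest by auto. apply (min_upto_le (fun r => max_upto (h r) T)); lia.
  - intros i Hi. change (h r0 (digit (T + 1) r0 i) <= min_upto (fun r => max_upto (h r) T) Q).
    rewrite <- Hmin. apply max_upto_ge.
    pose proof (digit_lt (T + 1) r0 i ltac:(lia)); lia.
Qed.

(* clip z is z truncated to [-1, 1]. *)
Definition clip (z : R) : R := / 2 * (Rabs (z + 1) - Rabs (z - 1)).

Lemma clip_bound z : -1 <= clip z <= 1.
Proof. unfold clip, Rabs; repeat destruct Rcase_abs; lra. Qed.

Lemma clip_low z : z <= -1 -> clip z = -1.
Proof. unfold clip, Rabs; repeat destruct Rcase_abs; lra. Qed.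

Lemma clip_cont : continuity clip.
Proof.
  unfold clip. apply continuity_scal, continuity_minus;
    apply (continuity_comp _ Rabs); try apply Rcontinuity_abs;
    [apply continuity_plus|apply continuity_minus];
    solve [apply derivable_continuous, derivable_id | apply continuity_const; intros ? ?; auto].
Qed.

Lemma clip_align z h : 0 < h -> Rabs z - h <= z * clip (z / h).
Proof.
  intros Hh. set (w := z / h). replace z with (w * h) by (unfold w; field; lra).
  rewrite Rabs_mult, (Rabs_right h) by lra.
  unfold clip, Rabs; repeat destruct Rcase_abs; nra.
Qed.

Lemma lin_clip_align n u h : 0 < h ->
  norm1 n u - INR n * h <= lin n (fun k => clip (u k / h)) u.
Proof.
  intros Hh. unfold lin, norm1. rewrite <- rsum_const, <- rsum_minus.
  apply rsum_le; intros; apply clip_align; auto.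
Qed.

(* The tilted functional c_t = clip ((q - t x) / h): a smoothed sign of q - t x. *)
Definition tilt (q x : nat -> R) (h t : R) (k : nat) : R := clip ((q k - t * x k) / h).

Lemma tilt_bounded n q x h t : bounded1 n (tilt q x h t).
Proof. intros k _; apply clip_bound. Qed.

Lemma tilt_response_cont n q x h : continuity (fun t => lin n (tilt q x h t) x).
Proof.
  unfold lin, tilt. induction n as [|n IH]; simpl.
  - apply continuity_const; intros ? ?; auto.
  - apply continuity_plus; [exact IH|].
    apply continuity_mult; [apply continuity_const; intros ? ?; auto|].
    apply (continuity_comp _ clip); [|apply clip_cont].
    apply continuity_mult; [|apply continuity_const; intros ? ?; auto].
    apply continuity_minus; [apply continuity_const; intros ? ?; auto|].
    apply continuity_mult; [apply derivable_continuous, derivable_id|].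
    apply continuity_const; intros ? ?; auto.
Qed.

(* For large t the tilt is -1 on the support of x, so its response at x is
   close to -1. *)
Lemma tilt_response_large n q x h T : simplex n x -> simplex n q ->
  0 < h <= 1 -> 0 < T -> lin n (tilt q x h T) x <= -1 + 4 * INR n / T.
Proof.
  intros Hx Hq Hh HT.
  replace (-1 + 4 * INR n / T) with (rsum (fun k => - x k + 4 / T) n).
  2:{ rewrite rsum_plus, rsum_const, (rsum_ext _ (fun k => -1 * x k)), rsum_scal
        by (intros; ring).
      destruct Hx as [_ ->]; field; lra. }
  apply rsum_le; intros k Hk. unfold tilt.
  assert (0 <= x k) by (apply Hx; auto).
  assert (q k <= 1) by (apply (simplex_coord_le1 n); auto).
  assert (0 < 4 / T) by (apply Rdiv_lt_0_compat; lra).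
  destruct (Rle_dec 2 (T * x k)).
  - rewrite clip_low; [lra|].
    apply (Rmult_le_reg_r h); [lra|]. unfold Rdiv.
    rewrite Rmult_assoc, Rinv_l, Rmult_1_r; lra.
  - assert (x k <= 2 / T).
    { apply (Rmult_le_reg_l T); [lra|]. unfold Rdiv.
      rewrite <- Rmult_assoc, (Rmult_comm T 2), Rmult_assoc, Rinv_r; lra. }
    assert (4 / T = 2 * (2 / T)) by (field; lra).
    pose proof (clip_bound ((q k - T * x k) / h)). nra.
Qed.

Lemma tilt_response_q n q x h t : 0 < h ->
  t * lin n (tilt q x h t) x + norm1 n (fun k => 1 * q k - t * x k) - INR n * h
  <= lin n (tilt q x h t) q.
Proof.
  intros Hh.
  assert (E : lin n (tilt q x h t) q
              = t * lin n (tilt q x h t) x + lin n (tilt q x h t) (fun k => 1 * q k - t * x k))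
    by (rewrite lin_affine; ring).
  rewrite E.
  pose proof (lin_clip_align n (fun k => 1 * q k - t * x k) h Hh) as Halign.
  cbv beta in Halign.
  replace (lin n (fun k => clip ((1 * q k - t * x k) / h)) (fun k => 1 * q k - t * x k))
    with (lin n (tilt q x h t) (fun k => 1 * q k - t * x k)) in Halign
    by (apply rsum_ext; intros; unfold tilt; rewrite Rmult_1_l; reflexivity).
  lra.
Qed.

(* Threshold choice: if a continuous phi satisfies phi T <= w for some T >= 0
   and v <= w, some t >= 0 has phi t <= w and t v <= t phi t (i.e. phi t >= v
   unless t = 0).  Cases: t = T if phi T >= v, t = 0 if phi 0 <= v, and
   otherwise a root of phi - v in [0, T]. *)
Lemma threshold_exists (phi : R -> R) v w T : continuity phi -> 0 <= T ->
  v <= w -> phi T <= w -> exists t, 0 <= t /\ phi t <= w /\ t * v <= t * phi t.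
Proof.
  intros Hphi HT Hvw HphiT.
  destruct (Rle_dec v (phi T)) as [HvT|HvT].
  { exists T; split; [|split]; auto. apply Rmult_le_compat_l; auto. }
  destruct (Rle_dec (phi 0) v) as [Hv0|Hv0]; [exists 0; split; [|split]; lra|].
  apply Rnot_le_lt in HvT, Hv0.
  destruct (IVT_cor (fun t => phi t - v) 0 T) as [t [Ht Hvt]]; auto.
  - apply continuity_minus; [auto|apply continuity_const; intros ? ?; auto].
  - assert (0 < phi 0 - v) by lra. assert (phi T - v < 0) by lra. nra.
  - exists t. replace (phi t) with v by lra. split; [|split]; lra.
Qed.

(* D1 functions are at least -1 (take a = 0, b = 1); this bounds the response
   at a large threshold by f x + eta. *)
Lemma D1ineq_ge_m1 n f x : D1ineq n f -> simplex n x -> -1 <= f x.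
Proof.
  intros HD Hx. pose proof (HD x x Hx Hx 0 1 ltac:(lra) ltac:(lra)) as H.
  rewrite (norm1_ext n _ (fun k => - x k)) in H by (intros; ring).
  replace (norm1 n (fun k => - x k)) with (norm1 n x) in H
    by (apply rsum_ext; intros; symmetry; apply Rabs_Ropp).
  rewrite norm1_simplex in H; auto; lra.
Qed.

(* Take c = tilt at a threshold t >= 0 with <c,x> <= f x + eta and
   t <c,x> >= t f x; then <c,q> >= t f x + |q - t x|_1 - eta/2 >= f q - eta
   by the D1 inequality with weights (1, t). *)
Lemma separation n f x q eta : (1 <= n)%nat -> D1ineq n f -> simplex n x -> simplex n q ->
  0 < eta <= 1 ->
  exists c, bounded1 n c /\ lin n c x <= f x + eta /\ f q - eta <= lin n c q.
Proof.
  intros Hn HD Hx Hq Heta.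
  assert (Hn1 : 1 <= INR n) by (apply (le_INR 1); auto).
  set (h := eta / (2 * INR n)).
  assert (Hh : 0 < h <= 1).
  { unfold h; split; [apply Rdiv_lt_0_compat; lra|].
    apply (Rmult_le_reg_r (2 * INR n)); [lra|].
    unfold Rdiv; rewrite Rmult_assoc, Rinv_l; lra. }
  assert (Hnh : INR n * h = eta / 2) by (unfold h; field; lra).
  set (T := 4 * INR n / eta).
  assert (HT : 0 < T) by (apply Rdiv_lt_0_compat; lra).
  assert (Hfar : lin n (tilt q x h T) x <= f x + eta).
  { pose proof (tilt_response_large n q x h T Hx Hq Hh HT).
    pose proof (D1ineq_ge_m1 n f x HD Hx).
    replace (4 * INR n / T) with eta in * by (unfold T; field; lra). lra. }
  destruct (threshold_exists (fun t => lin n (tilt q x h t) x) (f x) (f x + eta) T)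
    as [t [Ht [Hxt Hvt]]]; auto; [apply tilt_response_cont|lra|lra|].
  exists (tilt q x h t); split; [apply tilt_bounded|split; auto].
  pose proof (tilt_response_q n q x h t ltac:(lra)).
  pose proof (HD q x Hq Hx 1 t ltac:(lra) Ht). lra.
Qed.

Lemma floor_bounds y : IZR (Int_part y) <= y < IZR (Int_part y) + 1.
Proof. destruct (base_Int_part y); lra. Qed.

(* Rounding p in the simplex to a grid point m / N: take the differences of
   the floors z k of the cumulative sums N (p_0 + ... + p_{k-1}). *)
Lemma grid_round n N p : simplex n p ->
  exists m : nat -> nat, (forall k, (k < n)%nat -> (m k <= N)%nat) /\
    rsum (fun k => INR (m k)) n = INR N /\
    forall k, (k < n)%nat -> Rabs (INR N * p k - INR (m k)) < 1.
Proof.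
  intros [Hp0 Hp1].
  set (cum := fun k => INR N * rsum p k).
  set (z := fun k => Int_part (cum k)).
  assert (HN : 0 <= INR N) by apply pos_INR.
  assert (Hcum : forall k, (k <= n)%nat -> 0 <= cum k <= INR N).
  { intros k Hk. unfold cum.
    assert (0 <= rsum p k) by (apply (rsum_prefix_le p k O); [intros; apply Hp0|]; lia).
    assert (rsum p k <= 1) by (rewrite <- Hp1; apply rsum_prefix_le; auto). nra. }
  assert (Hstep : forall k, cum (S k) = cum k + INR N * p k)
    by (intros; unfold cum; simpl; ring).
  assert (Hz0 : forall k, (k <= n)%nat -> (0 <= z k)%Z).
  { intros k Hk. destruct (floor_bounds (cum k)). specialize (Hcum k Hk).
    fold (z k) in *. assert (Hlt : IZR (-1) < IZR (z k)) by (simpl; lra).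
    apply lt_IZR in Hlt; lia. }
  assert (HzN : forall k, (k <= n)%nat -> (z k <= Z.of_nat N)%Z).
  { intros k Hk. destruct (floor_bounds (cum k)). specialize (Hcum k Hk).
    apply le_IZR. rewrite <- INR_IZR_INZ. fold (z k) in *. lra. }
  assert (Hzmono : forall k, (k < n)%nat -> (z k <= z (S k))%Z).
  { intros k Hk. destruct (floor_bounds (cum k)), (floor_bounds (cum (S k))).
    assert (0 <= INR N * p k) by (apply Rmult_le_pos; auto).
    fold (z k) (z (S k)) in *. rewrite Hstep in *.
    assert (Hlt : IZR (z k) < IZR (z (S k) + 1)) by (rewrite plus_IZR; lra).
    apply lt_IZR in Hlt; lia. }
  exists (fun k => Z.to_nat (z (S k) - z k)).
  assert (Hm : forall k, (k < n)%nat ->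
            INR (Z.to_nat (z (S k) - z k)) = IZR (z (S k)) - IZR (z k)).
  { intros k Hk. rewrite INR_IZR_INZ, Z2Nat.id, minus_IZR; [reflexivity|].
    specialize (Hzmono k Hk); lia. }
  split; [|split].
  - intros k Hk. specialize (Hz0 k ltac:(lia)). specialize (HzN (S k) Hk). lia.
  - rewrite (rsum_ext _ (fun k => IZR (z (S k)) - IZR (z k))) by auto.
    rewrite (telescope (fun k => IZR (z k))).
    unfold z, cum. rewrite Hp1. simpl rsum.
    rewrite Rmult_1_r, Rmult_0_r, Int_part_INR, <- INR_IZR_INZ.
    replace 0 with (INR 0) by reflexivity.
    rewrite Int_part_INR; simpl; ring.
  - intros k Hk. rewrite Hm by auto.
    destruct (floor_bounds (cum k)), (floor_bounds (cum (S k))).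
    fold (z k) (z (S k)) in *. rewrite Hstep in *.
    apply Rabs_def1; lra.
Qed.

(* The r-th grid point: the digits of r in base N+1, divided by N, when they
   sum to N; a vertex otherwise. *)
Definition grid_point (n N r : nat) : nat -> R :=
  if Req_EM_T (rsum (fun k => INR (digit (S N) k r)) n) (INR N)
  then fun k => INR (digit (S N) k r) / INR N
  else vertex O.

Lemma grid_point_simplex n N r : (1 <= n)%nat -> (1 <= N)%nat -> simplex n (grid_point n N r).
Proof.
  intros Hn HN. assert (0 < INR N) by (apply lt_0_INR; lia).
  unfold grid_point. destruct Req_EM_T as [Hsum|_]; [|apply simplex_vertex; lia].
  split.
  - intros k _. apply Rmult_le_pos; [apply pos_INR|apply Rlt_le, Rinv_0_lt_compat; auto].
  - unfold Rdiv. rewrite (rsum_ext _ (fun k => / INR N * INR (digit (S N) k r)))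
      by (intros; ring).
    rewrite rsum_scal, Hsum. field; lra.
Qed.

Lemma grid_point_near n N p : (1 <= N)%nat -> simplex n p ->
  exists r, (r < S N ^ n)%nat /\ norm1 n (fun k => p k - grid_point n N r k) <= INR n / INR N.
Proof.
  intros HN Hp. assert (0 < INR N) by (apply lt_0_INR; lia).
  destruct (grid_round n N p Hp) as [m [Hm [Hsum Hclose]]].
  destruct (digits_choice (S N) n (fun k d => d = m k)) as [r [Hr Hdig]]; [lia| |].
  { intros k Hk. exists (m k); split; auto. specialize (Hm k Hk); lia. }
  exists r; split; auto.
  assert (Hgrid : grid_point n N r = fun k => INR (digit (S N) k r) / INR N).
  { unfold grid_point. destruct Req_EM_T as [|Hne]; auto.
    exfalso; apply Hne. rewrite <- Hsum. apply rsum_ext; intros; rewrite Hdig; auto. }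
  rewrite Hgrid. unfold norm1.
  replace (INR n / INR N) with (rsum (fun _ => / INR N) n) by (rewrite rsum_const; field; lra).
  apply rsum_le; intros k Hk. rewrite Hdig by auto.
  replace (p k - INR (m k) / INR N) with ((INR N * p k - INR (m k)) * / INR N) by (field; lra).
  rewrite Rabs_mult, (Rabs_right (/ INR N)) by (apply Rle_ge, Rlt_le, Rinv_0_lt_compat; auto).
  specialize (Hclose k Hk).
  assert (0 < / INR N) by (apply Rinv_0_lt_compat; auto). nra.
Qed.

Lemma simplex_net n d : (1 <= n)%nat -> 0 < d -> exists M (P : nat -> nat -> R),
  (forall r, (r <= M)%nat -> simplex n (P r)) /\
  forall p, simplex n p -> exists r, (r <= M)%nat /\ norm1 n (fun k => p k - P r k) <= d.
Proof.
  intros Hn Hd.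
  destruct (INR_unbounded (INR n / d)) as [N HN].
  assert (Hnd : 0 < INR n / d) by (apply Rdiv_lt_0_compat; [apply lt_0_INR; lia|auto]).
  assert (HN1 : (1 <= N)%nat) by (destruct N; [simpl in HN; lra|lia]).
  assert (HNpos : 0 < INR N) by lra.
  exists (S N ^ n - 1)%nat, (grid_point n N). split.
  - intros r _. apply grid_point_simplex; auto.
  - intros p Hp. destruct (grid_point_near n N p HN1 Hp) as [r [Hr Hnear]].
    exists r; split; [lia|]. eapply Rle_trans; [exact Hnear|].
    apply (Rmult_le_reg_r (INR N)); auto. unfold Rdiv.
    rewrite Rmult_assoc, Rinv_l by lra.
    apply (Rmult_lt_compat_r d) in HN; auto.
    unfold Rdiv in HN; rewrite Rmult_assoc, Rinv_l in HN; lra.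
Qed.

Lemma finite_choice2 {A : Type} (a0 : A) (P : nat -> nat -> A -> Prop) M :
  (forall r s, (r <= M)%nat -> (s <= M)%nat -> exists a, P r s a) ->
  exists C : nat -> nat -> A, forall r s, (r <= M)%nat -> (s <= M)%nat -> P r s (C r s).
Proof.
  intros HP.
  destruct (functional_choice (fun (rs : nat * nat) a =>
              (fst rs <= M)%nat -> (snd rs <= M)%nat -> P (fst rs) (snd rs) a)) as [C HC].
  - intros [r s]; simpl.
    destruct (le_dec r M), (le_dec s M);
      try (exists a0; intros; lia).
    destruct (HP r s) as [a Ha]; auto. exists a; auto.
  - exists (fun r s => C (r, s)). intros r s Hr Hs. apply (HC (r, s)); auto.
Qed.

(* Given eps, take an eps/4-net (P r) and, for each pair of net points, a
   functional C r s below f + eta at P r and above f - eta at P s.  Then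
   g = min_r max_s <C r s, .> is in D0 and is eps-close to f, since both f and
   the functionals are 1-Lipschitz. *)
Lemma D1_sub_closure_D0 n f : (1 <= n)%nat -> D1 n f -> closure_D0 n f.
Proof.
  intros Hn [Hc HD]. split; [exact Hc|]. intros eps He.
  set (eta := Rmin (eps / 4) 1).
  assert (Heta : 0 < eta <= 1 /\ eta <= eps / 4)
    by (unfold eta, Rmin; destruct Rle_dec; lra).
  destruct (simplex_net n (eps / 4) Hn ltac:(lra)) as [M [P [HP Hnet]]].
  destruct (finite_choice2 (fun _ => 0) (fun r s c => bounded1 n c /\
              lin n c (P r) <= f (P r) + eta /\ f (P s) - eta <= lin n c (P s)) M)
    as [C HC].
  { intros r s Hr Hs. apply separation; auto; lra. }
  set (g := fun p => min_upto (fun r => max_upto (fun s => lin n (C r s) p) M) M).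
  exists g; split; [apply minmax_in_D0; intros; apply HC; auto|].
  intros p Hp. destruct (Hnet p Hp) as [r0 [Hr0 Hd]].
  pose proof (D1ineq_lipschitz n f HD p (P r0) Hp (HP r0 Hr0)) as Hf.
  assert (Hlin : forall c, bounded1 n c -> Rabs (lin n c p - lin n c (P r0)) <= eps / 4)
    by (intros; eapply Rle_trans; [apply lin_lipschitz|]; auto).
  apply Rabs_le; split.
  - assert (g p <= f p + eta + eps / 2); [|lra].
    eapply Rle_trans; [apply (min_upto_le _ M r0 Hr0)|]. apply max_upto_le; intros s Hs.
    destruct (HC r0 s Hr0 Hs) as [Hb [Hup _]].
    pose proof (Rabs_le_inv _ _ (Hlin _ Hb)). pose proof (Rabs_le_inv _ _ Hf). lra.
  - assert (f p - eta - eps / 2 <= g p); [|lra].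
    apply min_upto_ge; intros r Hr. eapply Rle_trans; [|apply (max_upto_ge _ M r0 Hr0)].
    destruct (HC r r0 Hr Hr0) as [Hb [_ Hlow]].
    pose proof (Rabs_le_inv _ _ (Hlin _ Hb)). pose proof (Rabs_le_inv _ _ Hf). lra.
Qed.

Theorem lemma3 (n : nat) (hn : (1 <= n)%nat) :
  (forall f, D0 n f -> D1 n f) /\
  (forall f, closure_D0 n f <-> D1 n f).
Proof.
  split.
  - exact (D0_sub_D1 n).
  - intros f; split.
    + apply closure_D0_sub_D1.
    + apply D1_sub_closure_D0; auto.
Qed.
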